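(* Let $R$ be a Dedekind domain of characteristic $p>0$ with field of fractions $K$. Let $H_1$ and $H_2$ be primitively generated $R$-Hopf algebras with Dieudonné modules $M_1=\mathrm{Prim}(H_1)$ and $M_2=\mathrm{Prim}(H_2)$, and let $f:M_1\to M_2$ be an $R[F]$-module homomorphism. Let $D_*(f):H_1\to H_2$ denote the $R$-Hopf algebra homomorphism corresponding to $f$ under the Dieudonné equivalence (the unique Hopf algebra homomorphism whose restriction to primitive elements is $f$). If the induced $K[F]$-module map $K\otimes_R f: KM_1\to KM_2$ is an isomorphism, then $D_*(f)(H_1)$ and $H_2$ are both $R$-Hopf orders in $KH_2$.
   Context: All Hopf algebras are commutative, cocommutative, finitely generated projective, of $p$-power rank. For an $\mathbb{F}_p$-algebra $S$ and an $S$-Hopf algebra $H$ with comultiplication $\Delta$, $t\in H$ is primitive if $\Delta(t)=t\otimes 1+1\otimes t$; $\mathrm{Prim}(H)$ is the module of primitives and $H$ is primitively generated if generated as an algebra by $\mathrm{Prim}(H)$. $S[F]$ is the noncommutative polynomial ring with $Fa=a^pF$. The Dieudonné module of a primitively generated $S$-Hopf algebra $H$ is $\mathrm{Prim}(H)$ with $F$ acting by $t\mapsto t^p$; this gives an equivalence between primitively generated $S$-Hopf algebras and finite $S[F]$-modules free over $S$. For a $K$-Hopf algebra $H$, an $R$-Hopf order in $H$ is a finitely generated projective $R$-submodule $H_0\subseteq H$ which is an $R$-Hopf algebra under the operations inherited from $H$ and satisfies $KH_0=H$. *)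

From HB Require Import structures.
From mathcomp Require Import all_boot all_order all_algebra.
Set Implicit Arguments. Unset Strict Implicit. Unset Printing Implicit Defensive.
Import Order.TTheory GRing.Theory Num.Theory.
Local Open Scope ring_scope.

Section Defs.
Variable K : fieldType.

Definition subring (R : K -> Prop) :=
  [/\ R 0, R 1, (forall a b, R a -> R b -> R (a - b)),
      (forall a b, R a -> R b -> R (a + b)) & (forall a b, R a -> R b -> R (a * b))].

Definition frac_field (R : K -> Prop) :=
  forall x, exists a b, [/\ R a, R b, b != 0 & x = a / b].

Definition ideal (R : K -> Prop) (I : K -> Prop) :=
  [/\ forall x, I x -> R x, I 0, (forall x y, I x -> I y -> I (x + y))
    & (forall r x, R r -> I x -> I (r * x))].

Definition rgen (R : K -> Prop) (s : seq K) (x : K) :=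
  exists r : 'I_(size s) -> K, (forall i, R (r i)) /\ x = \sum_(i < size s) r i * s`_i.

Definition noetherian (R : K -> Prop) :=
  forall I, ideal R I ->
    exists s : seq K, (forall y, y \in s -> I y) /\ (forall x, I x -> rgen R s x).

Definition integrally_closed (R : K -> Prop) :=
  forall (q : {poly K}) (x : K),
    q \is monic -> (forall i, R q`_i) -> root q x -> R x.

Definition prime_ideal (R : K -> Prop) (I : K -> Prop) :=
  [/\ ideal R I, ~ I 1 & forall a b, R a -> R b -> I (a * b) -> I a \/ I b].

Definition maximal_ideal (R : K -> Prop) (I : K -> Prop) :=
  [/\ ideal R I, ~ I 1 &
      forall J, ideal R J -> (forall x, I x -> J x) -> J 1 \/ (forall x, J x -> I x)].

Definition dedekind (R : K -> Prop) :=
  [/\ subring R, noetherian R, integrally_closed R &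
      forall P, prime_ideal R P -> (exists x, P x /\ x != 0) -> maximal_ideal R P].

(* basis e_i = delta_mx 0 i; K^n (x) K^n is identified with 'M_n via
   x (x) y := x^T *m y. *)
Record hopf_data (n : nat) := HopfData {
  hmu : 'I_n -> 'I_n -> 'rV[K]_n;
  hone : 'rV[K]_n;
  hdel : 'I_n -> 'M[K]_n;           (* Delta e_k = sum_(i,j) hdel k i j e_i (x) e_j *)
  heps : 'I_n -> K;
  hant : 'M[K]_n
}.

Variable n : nat.
Implicit Types (h : hopf_data n) (x y z : 'rV[K]_n).

Definition ev (i : 'I_n) : 'rV[K]_n := delta_mx 0 i.
Definition tens x y : 'M[K]_n := x^T *m y.
Definition mulv h x y : 'rV[K]_n :=
  \sum_(i < n) \sum_(j < n) (x 0 i * y 0 j) *: hmu h i j.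
Definition delv h x : 'M[K]_n := \sum_(k < n) x 0 k *: hdel h k.
Definition epsv h x : K := \sum_(k < n) x 0 k * heps h k.
Definition antv h x : 'rV[K]_n := x *m hant h.
Definition tmul h (s t : 'M[K]_n) : 'M[K]_n :=
  \sum_(a < n) \sum_(b < n) \sum_(c < n) \sum_(d < n)
     (s a b * t c d) *: tens (hmu h a c) (hmu h b d).
Definition powv h x (k : nat) : 'rV[K]_n := iter k (mulv h x) (hone h).

(* commutative, cocommutative K-Hopf algebra *)
Definition is_hopf h :=
  [/\ (forall x y z, mulv h (mulv h x y) z = mulv h x (mulv h y z)),
      (forall x y, mulv h x y = mulv h y x),
      (forall x, mulv h (hone h) x = x),
      (forall k a b c : 'I_n,
         \sum_(i < n) hdel h k i c * hdel h i a b
         = \sum_(j < n) hdel h k a j * hdel h j b c) &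
      (forall k, (hdel h k)^T = hdel h k) ] /\
  [/\ (forall k j : 'I_n, \sum_(i < n) heps h i * hdel h k i j = (k == j)%:R
                      /\ \sum_(i < n) heps h i * hdel h k j i = (k == j)%:R),
      (forall x y, delv h (mulv h x y) = tmul h (delv h x) (delv h y)),
      delv h (hone h) = tens (hone h) (hone h),
      (forall x y, epsv h (mulv h x y) = epsv h x * epsv h y) /\ epsv h (hone h) = 1 &
      (forall k, \sum_(i < n) \sum_(j < n) hdel h k i j *: mulv h (antv h (ev i)) (ev j)
                 = heps h k *: hone h
              /\ \sum_(i < n) \sum_(j < n) hdel h k i j *: mulv h (ev i) (antv h (ev j))
                 = heps h k *: hone h) ].

Definition kspan (L : 'rV[K]_n -> Prop) (v : 'rV[K]_n) :=
  exists s : seq (K * 'rV[K]_n),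
    (forall q, q \in s -> L q.2) /\ v = \sum_(q <- s) q.1 *: q.2.

(* image of L (x)_R L in K^n (x)_K K^n *)
Definition rtens (R : K -> Prop) (L : 'rV[K]_n -> Prop) (t : 'M[K]_n) :=
  exists s : seq (K * ('rV[K]_n * 'rV[K]_n)),
    (forall q, q \in s -> [/\ R q.1, L q.2.1 & L q.2.2]) /\
    t = \sum_(q <- s) q.1 *: tens q.2.1 q.2.2.

Definition rsubmod (R : K -> Prop) (L : 'rV[K]_n -> Prop) :=
  [/\ L 0, (forall x y, L x -> L y -> L (x + y))
    & (forall r x, R r -> L x -> L (r *: x))].

Definition fgproj (R : K -> Prop) (L : 'rV[K]_n -> Prop) :=
  (exists s : seq 'rV[K]_n, (forall x, x \in s -> L x) /\
     forall x, L x -> exists r : 'I_(size s) -> K,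
        (forall i, R (r i)) /\ x = \sum_(i < size s) r i *: s`_i) /\
  exists (m : nat) (a : 'rV[K]_n -> 'rV[K]_m) (b : 'rV[K]_m -> 'rV[K]_n),
    [/\ (forall x, L x -> forall i, R (a x 0 i)),
        (forall x y, L x -> L y -> a (x + y) = a x + a y),
        (forall r x, R r -> L x -> a (r *: x) = r *: a x) &
        (forall u : 'rV[K]_m, (forall i, R (u 0 i)) -> L (b u))] /\
    [/\
        (forall u w : 'rV[K]_m, (forall i, R (u 0 i)) -> (forall i, R (w 0 i)) -> b (u + w) = b u + b w),
        (forall r (u : 'rV[K]_m), R r -> (forall i, R (u 0 i)) -> b (r *: u) = r *: b u) &
        (forall x, L x -> b (a x) = x)].

Definition hopf_order (R : K -> Prop) h (L : 'rV[K]_n -> Prop) :=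
  [/\ rsubmod R L, fgproj R L, (forall v, kspan L v),
      L (hone h) & (forall x y, L x -> L y -> L (mulv h x y))] /\
  [/\ (forall x, L x -> R (epsv h x)),
      (forall x, L x -> L (antv h x)) &
      (forall x, L x -> rtens R L (delv h x))].

Definition prim h (L : 'rV[K]_n -> Prop) (t : 'rV[K]_n) :=
  L t /\ delv h t = tens t (hone h) + tens (hone h) t.

Definition rsubalg (R : K -> Prop) h (S : 'rV[K]_n -> Prop) :=
  [/\ rsubmod R S, S (hone h) & (forall x y, S x -> S y -> S (mulv h x y))].

Definition prim_gen (R : K -> Prop) h (L : 'rV[K]_n -> Prop) :=
  forall S, rsubalg R h S -> (forall t, prim h L t -> S t) -> forall x, L x -> S x.

End Defs.

Section Homs.
Variable K : fieldType.
Variables (n1 n2 : nat) (h1 : hopf_data K n1) (h2 : hopf_data K n2).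
Variables (L1 : 'rV[K]_n1 -> Prop) (L2 : 'rV[K]_n2 -> Prop).

(* R-Hopf algebra homomorphism L1 -> L2, given by (the K-linear extension)
   x |-> x *m A *)
Definition hopf_hom (R : K -> Prop) (A : 'M[K]_(n1, n2)) :=
  [/\ (forall x, L1 x -> L2 (x *m A)),
      (forall x y, L1 x -> L1 y -> mulv h2 (x *m A) (y *m A) = mulv h1 x y *m A),
      hone h1 *m A = hone h2,
      (forall x, L1 x -> delv h2 (x *m A) = A^T *m delv h1 x *m A) &
      (forall x, L1 x -> epsv h2 (x *m A) = epsv h1 x)].

(* f : Prim(L1) -> Prim(L2) is an R[F]-module homomorphism,
   with F t = t^p *)
Definition RF_hom (R : K -> Prop) (p : nat) (f : 'rV[K]_n1 -> 'rV[K]_n2) :=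
  [/\ (forall t, prim h1 L1 t -> prim h2 L2 (f t)),
      (forall s t, prim h1 L1 s -> prim h1 L1 t -> f (s + t) = f s + f t),
      (forall r t, R r -> prim h1 L1 t -> f (r *: t) = r *: f t) &
      (forall t, prim h1 L1 t -> f (powv h1 t p) = powv h2 (f t) p)].

(* K (x)_R f : K M1 -> K M2 is an isomorphism (K M_i identified with the
   K-span of M_i inside K^n_i) *)
Definition kext_iso (f : 'rV[K]_n1 -> 'rV[K]_n2) :=
  (forall s : seq (K * 'rV[K]_n1), (forall q, q \in s -> prim h1 L1 q.2) ->
     \sum_(q <- s) q.1 *: f q.2 = 0 -> \sum_(q <- s) q.1 *: q.2 = 0) /\
  (forall w, kspan (prim h2 L2) w ->
     exists s : seq (K * 'rV[K]_n1), (forall q, q \in s -> prim h1 L1 q.2) /\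
        w = \sum_(q <- s) q.1 *: f q.2).

End Homs.

From HB Require Import structures.
From mathcomp Require Import all_boot all_order all_algebra.
Set Implicit Arguments. Unset Strict Implicit. Unset Printing Implicit Defensive.
Import Order.TTheory GRing.Theory Num.Theory.
Local Open Scope ring_scope.

(* The matrix [A] of [D_*(f)] is a K-linear isomorphism compatible with all the
   Hopf operations, so it carries the Hopf order [L1] onto a Hopf order in [KH2].
   Injectivity: [H1] is primitively generated, so every vector lies in the span
   of the products of at most [m] primitives for some [m]; the reduced coproduct
   maps this span into the tensor square of the previous one, on which [A (x) A]
   is injective by induction, so [x A = 0] forces [x] to be primitive, and there
   [A] agrees with [f], which is injective after extending scalars to [K].
   Surjectivity: [H2] is generated by its primitives, which are K-combinations of
   values of [f]. The antipodes are respected because [A \o S1] and [S2 \o A] are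
   a right and a left convolution inverse of [A]. *)

Section Subspaces.
Variable K : fieldType.

Definition subspace (V : lmodType K) (P : V -> Prop) :=
  [/\ P 0, (forall u v, P u -> P v -> P (u + v)) & (forall a u, P u -> P (a *: u))].

Section Closure.
Variables (V : lmodType K) (P : V -> Prop).
Hypothesis HP : subspace P.

Lemma subspace0 : P 0. Proof. by case: HP. Qed.

Lemma subspaceD u v : P u -> P v -> P (u + v).
Proof. by case: HP => _ PD _; apply: PD. Qed.

Lemma subspaceZ a u : P u -> P (a *: u).
Proof. by case: HP => _ _ PZ; apply: PZ. Qed.

Lemma subspace_sum (I : eqType) (r : seq I) (F : I -> V) :
  (forall i, i \in r -> P (F i)) -> P (\sum_(i <- r) F i).
Proof.
elim: r => [|a r IH] Hr; first by rewrite big_nil; exact: subspace0.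
rewrite big_cons; apply: subspaceD; first by apply: Hr; rewrite mem_head.
by apply: IH => i ir; apply: Hr; rewrite inE ir orbT.
Qed.

End Closure.

Section Linear.
Variables (U V : lmodType K) (g : U -> V).
Hypotheses (gD : forall u v, g (u + v) = g u + g v) (gZ : forall a u, g (a *: u) = a *: g u).

Lemma subspace_preim (P : V -> Prop) : subspace P -> subspace (fun u => P (g u)).
Proof.
move=> HP; split.
- by rewrite -[0 : U](scale0r 0) gZ scale0r; exact: subspace0.
- by move=> u v Pu Pv; rewrite gD; exact: subspaceD.
- by move=> a u Pu; rewrite gZ; exact: subspaceZ.
Qed.

Lemma subspace_eq (g' : U -> V) :
  (forall u v, g' (u + v) = g' u + g' v) -> (forall a u, g' (a *: u) = a *: g' u) ->
  subspace (fun u => g u = g' u).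
Proof.
move=> g'D g'Z; split.
- by rewrite -[0 : U](scale0r 0) gZ g'Z !scale0r.
- by move=> u v eu ev; rewrite gD g'D eu ev.
- by move=> a u eu; rewrite gZ g'Z eu.
Qed.

End Linear.

Variable n : nat.
Implicit Types (G P : 'rV[K]_n -> Prop).

Lemma kspan_ind G P v : subspace P -> (forall x, G x -> P x) -> kspan G v -> P v.
Proof.
move=> HP HG [s [Hs ->]]; apply: subspace_sum => // q qs.
by apply: subspaceZ => //; apply/HG/Hs.
Qed.

Lemma kspan_gen G x : G x -> kspan G x.
Proof.
move=> Gx; exists [:: (1, x)]; split; first by move=> q; rewrite inE => /eqP ->.
by rewrite big_seq1 scale1r.
Qed.

Lemma kspan_subspace G : subspace (kspan G).
Proof.
split.
- by exists [::]; split => //; rewrite big_nil.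
- move=> x y [s [Hs ->]] [t [Ht ->]]; exists (s ++ t); split; last by rewrite big_cat.
  by move=> q; rewrite mem_cat => /orP [] ?; [apply: Hs | apply: Ht].
- move=> c x [s [Hs ->]]; exists [seq (c * q.1, q.2) | q <- s]; split.
    by move=> q /mapP [q' q's ->]; exact: Hs q' q's.
  by rewrite big_map scaler_sumr; apply: eq_bigr => q _; rewrite scalerA.
Qed.

Definition tens_span (F : 'rV[K]_n -> Prop) (M : 'M[K]_n) :=
  exists s : seq (K * ('rV[K]_n * 'rV[K]_n)),
    (forall q, q \in s -> F q.2.1 /\ F q.2.2) /\
    M = \sum_(q <- s) q.1 *: tens q.2.1 q.2.2.

Lemma tens_span_subspace F : subspace (tens_span F).
Proof.
split.
- by exists [::]; split => //; rewrite big_nil.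
- move=> x y [s [Hs ->]] [t [Ht ->]]; exists (s ++ t); split; last by rewrite big_cat.
  by move=> q; rewrite mem_cat => /orP [] ?; [apply: Hs | apply: Ht].
- move=> c x [s [Hs ->]]; exists [seq (c * q.1, q.2) | q <- s]; split.
    by move=> q /mapP [q' q's ->]; exact: Hs q' q's.
  by rewrite big_map scaler_sumr; apply: eq_bigr => q _; rewrite scalerA.
Qed.

Lemma tens_span_gen F u v : F u -> F v -> tens_span F (tens u v).
Proof.
move=> Fu Fv; exists [:: (1, (u, v))]; split; first by move=> q; rewrite inE => /eqP ->.
by rewrite big_seq1 scale1r.
Qed.

Lemma tens_span_mono F F' M :
  (forall x, F x -> F' x) -> tens_span F M -> tens_span F' M.
Proof.
move=> FF' [s [Hs ->]]; exists s; split => // q qs.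
by case: (Hs q qs) => ? ?; split; apply: FF'.
Qed.

End Subspaces.

Section StructureConstants.
Variables (K : fieldType) (n : nat) (h : hopf_data K n).
Implicit Types (x y z : 'rV[K]_n) (c : K) (M N : 'M[K]_n).

Lemma mulvDl x y z : mulv h (x + y) z = mulv h x z + mulv h y z.
Proof.
rewrite /mulv -big_split; apply: eq_bigr => i _; rewrite -big_split.
by apply: eq_bigr => j _; rewrite !mxE mulrDl scalerDl.
Qed.

Lemma mulvDr x y z : mulv h z (x + y) = mulv h z x + mulv h z y.
Proof.
rewrite /mulv -big_split; apply: eq_bigr => i _; rewrite -big_split.
by apply: eq_bigr => j _; rewrite !mxE mulrDr scalerDl.
Qed.

Lemma mulvZl c x z : mulv h (c *: x) z = c *: mulv h x z.
Proof.
rewrite /mulv scaler_sumr; apply: eq_bigr => i _; rewrite scaler_sumr.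
by apply: eq_bigr => j _; rewrite !mxE scalerA mulrA.
Qed.

Lemma mulvZr c x z : mulv h z (c *: x) = c *: mulv h z x.
Proof.
rewrite /mulv scaler_sumr; apply: eq_bigr => i _; rewrite scaler_sumr.
by apply: eq_bigr => j _; rewrite !mxE scalerA mulrCA mulrA.
Qed.

Lemma mulv_suml (I : Type) (r : seq I) (F : I -> 'rV[K]_n) z :
  mulv h (\sum_(i <- r) F i) z = \sum_(i <- r) mulv h (F i) z.
Proof.
apply: (big_morph (mulv h^~ z)) => [u v|]; first exact: mulvDl.
by rewrite -[0 : 'rV_n](scale0r 0) mulvZl !scale0r.
Qed.

Lemma mulv_sumr (I : Type) (r : seq I) (F : I -> 'rV[K]_n) z :
  mulv h z (\sum_(i <- r) F i) = \sum_(i <- r) mulv h z (F i).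
Proof.
apply: (big_morph (mulv h z)) => [u v|]; first exact: mulvDr.
by rewrite -[0 : 'rV_n](scale0r 0) mulvZr !scale0r.
Qed.

Lemma delvD x y : delv h (x + y) = delv h x + delv h y.
Proof. by rewrite /delv -big_split; apply: eq_bigr => i _; rewrite mxE scalerDl. Qed.

Lemma delvZ c x : delv h (c *: x) = c *: delv h x.
Proof. by rewrite /delv scaler_sumr; apply: eq_bigr => i _; rewrite mxE scalerA. Qed.

Lemma delv0 : delv h 0 = 0.
Proof. by rewrite -[0 : 'rV_n](scale0r 0) delvZ !scale0r. Qed.

Lemma delvE x i j : delv h x i j = \sum_(k < n) x 0 k * hdel h k i j.
Proof. by rewrite /delv summxE; apply: eq_bigr => k _; rewrite mxE. Qed.

Lemma epsvD x y : epsv h (x + y) = epsv h x + epsv h y.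
Proof. by rewrite /epsv -big_split; apply: eq_bigr => i _; rewrite mxE mulrDl. Qed.

Lemma epsvZ c x : epsv h (c *: x) = c * epsv h x.
Proof. by rewrite /epsv mulr_sumr; apply: eq_bigr => i _; rewrite mxE mulrA. Qed.

Lemma evE (i k : 'I_n) : ev K i 0 k = (i == k)%:R.
Proof. by rewrite /ev mxE eqxx eq_sym. Qed.

Lemma delv_ev i : delv h (ev K i) = hdel h i.
Proof.
rewrite /delv (bigD1 i) //= big1 ?addr0 ?evE ?eqxx ?scale1r // => k /negbTE ki.
by rewrite evE eq_sym ki scale0r.
Qed.

Lemma epsv_ev i : epsv h (ev K i) = heps h i.
Proof.
rewrite /epsv (bigD1 i) //= big1 ?addr0 ?evE ?eqxx ?mul1r // => k /negbTE ki.
by rewrite evE eq_sym ki mul0r.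
Qed.

Lemma delv_expand (V : lmodType K) (Y : 'I_n -> 'I_n -> V) x :
  \sum_(i < n) \sum_(j < n) delv h x i j *: Y i j
  = \sum_(k < n) x 0 k *: (\sum_(i < n) \sum_(j < n) hdel h k i j *: Y i j).
Proof.
transitivity (\sum_(i < n) \sum_(k < n) \sum_(j < n) (x 0 k * hdel h k i j) *: Y i j).
  apply: eq_bigr => i _; rewrite exchange_big /=; apply: eq_bigr => j _.
  by rewrite delvE scaler_suml.
rewrite exchange_big /=; apply: eq_bigr => k _; rewrite scaler_sumr.
apply: eq_bigr => i _; rewrite scaler_sumr; apply: eq_bigr => j _.
by rewrite scalerA.
Qed.

Lemma tensDl x y z : tens (x + y) z = tens x z + tens y z.
Proof. by rewrite /tens linearD mulmxDl. Qed.

Lemma tensDr x y z : tens z (x + y) = tens z x + tens z y.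
Proof. by rewrite /tens mulmxDr. Qed.

Lemma tensZl c x z : tens (c *: x) z = c *: tens x z.
Proof. by rewrite /tens linearZ /= scalemxAl. Qed.

Lemma tensZr c x z : tens z (c *: x) = c *: tens z x.
Proof. by rewrite /tens scalemxAr. Qed.

Lemma tensE x y i j : tens x y i j = x 0 i * y 0 j.
Proof. by rewrite /tens !mxE big_ord1 !mxE. Qed.

Lemma tens_suml (I : Type) (r : seq I) (F : I -> 'rV[K]_n) y :
  tens (\sum_(i <- r) F i) y = \sum_(i <- r) tens (F i) y.
Proof. by rewrite /tens linear_sum /= mulmx_suml. Qed.

Lemma tens_sumr (I : Type) (r : seq I) (F : I -> 'rV[K]_n) y :
  tens y (\sum_(i <- r) F i) = \sum_(i <- r) tens y (F i).
Proof. by rewrite /tens mulmx_sumr. Qed.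

Lemma tmulDl M N P : tmul h (M + N) P = tmul h M P + tmul h N P.
Proof.
rewrite /tmul -big_split; apply: eq_bigr => a _; rewrite -big_split.
apply: eq_bigr => b _; rewrite -big_split; apply: eq_bigr => c _; rewrite -big_split.
by apply: eq_bigr => d _; rewrite !mxE mulrDl scalerDl.
Qed.

Lemma tmulDr M N P : tmul h P (M + N) = tmul h P M + tmul h P N.
Proof.
rewrite /tmul -big_split; apply: eq_bigr => a _; rewrite -big_split.
apply: eq_bigr => b _; rewrite -big_split; apply: eq_bigr => c _; rewrite -big_split.
by apply: eq_bigr => d _; rewrite !mxE mulrDr scalerDl.
Qed.

Lemma tmulZr k M P : tmul h P (k *: M) = k *: tmul h P M.
Proof.
rewrite /tmul scaler_sumr; apply: eq_bigr => a _; rewrite scaler_sumr.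
apply: eq_bigr => b _; rewrite scaler_sumr; apply: eq_bigr => c _; rewrite scaler_sumr.
by apply: eq_bigr => d _; rewrite !mxE scalerA mulrCA mulrA.
Qed.

Lemma tmul_sumr M (I : Type) (r : seq I) (F : I -> 'M[K]_n) :
  tmul h M (\sum_(i <- r) F i) = \sum_(i <- r) tmul h M (F i).
Proof.
apply: (big_morph (tmul h M)) => [N P|]; first exact: tmulDr.
by rewrite -[0 : 'M_n](scale0r 0) tmulZr !scale0r.
Qed.

Lemma tmul_tens (a b c d : 'rV[K]_n) :
  tmul h (tens a b) (tens c d) = tens (mulv h a c) (mulv h b d).
Proof.
rewrite /mulv tens_suml.
transitivity (\sum_(i < n) \sum_(k < n) \sum_(j < n) \sum_(l < n)
   ((a 0 i * c 0 k) * (b 0 j * d 0 l)) *: tens (hmu h i k) (hmu h j l)).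
  rewrite /tmul; apply: eq_bigr => i _; rewrite exchange_big /=.
  apply: eq_bigr => k _; apply: eq_bigr => j _; apply: eq_bigr => l _.
  by rewrite !tensE mulrACA.
apply: eq_bigr => i _; rewrite tens_suml; apply: eq_bigr => k _.
rewrite tensZl tens_sumr scaler_sumr; apply: eq_bigr => j _.
rewrite tens_sumr scaler_sumr; apply: eq_bigr => l _.
by rewrite tensZr scalerA.
Qed.

Lemma tmul_tens_span (F G : 'rV[K]_n -> Prop) a b M :
  (forall u, F u -> G (mulv h a u)) -> (forall u, F u -> G (mulv h b u)) ->
  tens_span F M -> tens_span G (tmul h (tens a b) M).
Proof.
move=> Ha Hb [s [Hs ->]]; rewrite tmul_sumr.
apply: subspace_sum; first exact: tens_span_subspace.
move=> q qs; rewrite tmulZr tmul_tens; apply: subspaceZ; first exact: tens_span_subspace.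
by case: (Hs q qs) => ? ?; apply: tens_span_gen; [apply: Ha | apply: Hb].
Qed.

Lemma mulv_antv_expand (u v : 'rV[K]_n) :
  mulv h (antv h u) v
  = \sum_(k < n) \sum_(l < n) (u 0 k * v 0 l) *: mulv h (antv h (ev K k)) (ev K l).
Proof.
rewrite {1}(row_sum_delta u) {1}(row_sum_delta v) /antv mulmx_suml mulv_suml.
apply: eq_bigr => k _; rewrite -scalemxAl mulvZl mulv_sumr scaler_sumr.
by apply: eq_bigr => l _; rewrite mulvZr scalerA.
Qed.

Definition primitive t := delv h t = tens t (hone h) + tens (hone h) t.

Definition rdelv x := delv h x - tens x (hone h) - tens (hone h) x.

Lemma rdelvD x y : rdelv (x + y) = rdelv x + rdelv y.
Proof.
rewrite /rdelv delvD tensDl tensDr !opprD !addrA; congr (_ + _); rewrite -!addrA.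
by congr (_ + _); rewrite addrC -!addrA; congr (_ + _); rewrite addrC -!addrA.
Qed.

Lemma rdelvZ c x : rdelv (c *: x) = c *: rdelv x.
Proof. by rewrite /rdelv delvZ tensZl tensZr !scalerBr. Qed.

Lemma rdelv_primitive t : primitive t -> rdelv t = 0.
Proof. by rewrite /rdelv => ->; rewrite (addrC (tens t _)) addrK subrr. Qed.

Lemma primitive_rdelv t : rdelv t = 0 -> primitive t.
Proof. by rewrite /rdelv /primitive -addrA -opprD => /eqP; rewrite subr_eq0 => /eqP. Qed.

Lemma rdelv_subspace (F : 'rV[K]_n -> Prop) : subspace (fun x => tens_span F (rdelv x)).
Proof. exact/subspace_preim/tens_span_subspace/rdelvZ/rdelvD. Qed.

End StructureConstants.

Section HopfAxioms.
Variables (K : fieldType) (n : nat) (h : hopf_data K n).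
Hypothesis Hh : is_hopf h.
Implicit Types (x y z t : 'rV[K]_n).

Lemma mulvA x y z : mulv h (mulv h x y) z = mulv h x (mulv h y z).
Proof. by case: Hh => [[H _ _ _ _] _]; apply: H. Qed.

Lemma mul1v x : mulv h (hone h) x = x.
Proof. by case: Hh => [[_ _ H _ _] _]; apply: H. Qed.

Lemma mulv1 x : mulv h x (hone h) = x.
Proof. by case: Hh => [[_ C H _ _] _]; rewrite C H. Qed.

Lemma hdel_coassoc k a b c :
  \sum_(i < n) hdel h k i c * hdel h i a b = \sum_(j < n) hdel h k a j * hdel h j b c.
Proof. by case: Hh => [[_ _ _ H _] _]; apply: H. Qed.

Lemma delvM x y : delv h (mulv h x y) = tmul h (delv h x) (delv h y).
Proof. by case: Hh => [_ [_ H _ _ _]]; apply: H. Qed.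

Lemma delv1 : delv h (hone h) = tens (hone h) (hone h).
Proof. by case: Hh => [_ [_ _ H _ _]]. Qed.

Lemma epsv1 : epsv h (hone h) = 1.
Proof. by case: Hh => [_ [_ _ _ [_ H] _]]. Qed.

Lemma hone_neq0 : hone h != 0.
Proof.
apply/eqP => h10; have := epsv1; rewrite h10 -[0 : 'rV_n](scale0r 0) epsvZ mul0r.
by move/eqP; rewrite eq_sym oner_eq0.
Qed.

Lemma counit_l (k j : 'I_n) : \sum_(i < n) hdel h k i j * heps h i = (k == j)%:R.
Proof.
case: Hh => [_ [H _ _ _ _]]; rewrite -(H k j).1.
by apply: eq_bigr => i _; rewrite mulrC.
Qed.

Lemma counit_r (k i : 'I_n) : \sum_(j < n) hdel h k i j * heps h j = (k == i)%:R.
Proof.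
case: Hh => [_ [H _ _ _ _]]; rewrite -(H k i).2.
by apply: eq_bigr => j _; rewrite mulrC.
Qed.

Lemma antipode_l x :
  \sum_(i < n) \sum_(j < n) delv h x i j *: mulv h (antv h (ev K i)) (ev K j)
  = epsv h x *: hone h.
Proof.
rewrite delv_expand /epsv scaler_suml; apply: eq_bigr => k _.
by case: Hh => [_ [_ _ _ _ H]]; rewrite (H k).1 scalerA.
Qed.

Lemma antipode_r x :
  \sum_(i < n) \sum_(j < n) delv h x i j *: mulv h (ev K i) (antv h (ev K j))
  = epsv h x *: hone h.
Proof.
rewrite delv_expand /epsv scaler_suml; apply: eq_bigr => k _.
by case: Hh => [_ [_ _ _ _ H]]; rewrite (H k).2 scalerA.
Qed.

Lemma rdelv1 : rdelv h (hone h) = - tens (hone h) (hone h).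
Proof. by rewrite /rdelv delv1 subrr sub0r. Qed.

Lemma rdelvM t z : primitive h t ->
  rdelv h (mulv h t z) = tens t z + tens z t
     + tmul h (tens t (hone h)) (rdelv h z) + tmul h (tens (hone h) t) (rdelv h z).
Proof.
move=> Pt; rewrite {1}/rdelv delvM Pt.
have -> : delv h z = tens z (hone h) + tens (hone h) z + rdelv h z.
  by rewrite /rdelv addrC -[_ - _ - _]addrA -opprD subrK.
move: (rdelv h z) => D.
rewrite !tmulDl !tmulDr !tmul_tens !mul1v !mulv1.
have AC (V : zmodType) (a b c d e f : V) : a + b + c + (d + e + f) - a - e = b + d + c + f.
  by rewrite -!addrA 5!(addrCA a) addNKr (addrCA e) addrN addr0 (addrCA c).
exact: AC.
Qed.

Fixpoint prim_filt (m : nat) : 'rV[K]_n -> Prop :=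
  match m with
  | 0 => fun x => exists c, x = c *: hone h
  | m'.+1 => kspan (fun y => prim_filt m' y \/
                     exists t z, [/\ primitive h t, prim_filt m' z & y = mulv h t z])
  end.

Lemma prim_filt_subspace m : subspace (prim_filt m).
Proof.
case: m => [|m] /=; last exact: kspan_subspace.
split; first by exists 0; rewrite scale0r.
  by move=> x y [a ->] [b ->]; exists (a + b); rewrite scalerDl.
by move=> a x [b ->]; exists (a * b); rewrite scalerA.
Qed.

Lemma prim_filtS m x : prim_filt m x -> prim_filt m.+1 x.
Proof. by move=> H; apply: kspan_gen; left. Qed.

Lemma prim_filt_mono m k x : (m <= k)%N -> prim_filt m x -> prim_filt k x.
Proof.
move=> /subnK <-; elim: (k - m)%N => [|j IH] // H.
by rewrite addSn; apply/prim_filtS/IH.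
Qed.

Lemma prim_filt_one m : prim_filt m (hone h).
Proof. by apply: (@prim_filt_mono 0) => //; exists 1; rewrite scale1r. Qed.

Lemma prim_filt_prim m t : primitive h t -> prim_filt m.+1 t.
Proof.
move=> Pt; apply: kspan_gen; right; exists t, (hone h).
by rewrite mulv1; split => //; exact: prim_filt_one.
Qed.

Lemma prim_filt_mul a b x y :
  prim_filt a x -> prim_filt b y -> prim_filt (a + b) (mulv h x y).
Proof.
elim: a x y => [|a IH] x y /=.
  by move=> [c ->] Hy; rewrite mulvZl mul1v; apply: subspaceZ => //; exact: prim_filt_subspace.
move=> Hx Hy.
apply: (kspan_ind (P := fun u => prim_filt (a + b).+1 (mulv h u y)) _ _ Hx).
  exact: (subspace_preim (fun u v => mulvDl h u v y) (fun c u => mulvZl h c u y)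
                          (prim_filt_subspace _)).
move=> u [Hu | [t [z [Pt Hz ->]]]]; first by apply/prim_filtS/IH.
rewrite mulvA; apply: kspan_gen; right; exists t, (mulv h z y); split => //.
exact: IH.
Qed.

Lemma rdelv_prim_filt m x : prim_filt m.+1 x -> tens_span (prim_filt m) (rdelv h x).
Proof.
have Tsub k := tens_span_subspace (prim_filt k).
elim: m x => [|m IH] x Hx; apply: (kspan_ind (rdelv_subspace h _) _ Hx).
  move=> u [[c ->] | [t [z [Pt [c ->] ->]]]].
    rewrite rdelvZ rdelv1 -scaleN1r; apply/(subspaceZ (Tsub 0))/(subspaceZ (Tsub 0)).
    by apply: tens_span_gen; exact: prim_filt_one.
  rewrite mulvZr mulv1 rdelvZ rdelv_primitive // scaler0; exact: subspace0.
move=> u [Hu | [t [z [Pt Hz ->]]]].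
  exact: tens_span_mono (@prim_filtS m) (IH u Hu).
have Ht : prim_filt m.+1 t by exact: prim_filt_prim.
have tFz v : prim_filt m v -> prim_filt m.+1 (mulv h t v).
  by rewrite -[m.+1]add1n; apply: prim_filt_mul; exact: prim_filt_prim.
have oneFz v : prim_filt m v -> prim_filt m.+1 (mulv h (hone h) v).
  by rewrite mul1v; exact: prim_filtS.
rewrite rdelvM //; apply: (subspaceD (Tsub _)); first apply: (subspaceD (Tsub _)).
- by apply: (subspaceD (Tsub _)); apply: tens_span_gen.
- exact: tmul_tens_span tFz oneFz (IH z Hz).
- exact: tmul_tens_span oneFz tFz (IH z Hz).
Qed.

End HopfAxioms.

Section MatrixMaps.
Variables (K : fieldType) (n1 n2 : nat) (A : 'M[K]_(n1, n2)).

Lemma ev_mulmx (i : 'I_n1) k : (ev K i *m A) 0 k = A i k.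
Proof. by rewrite /ev -rowE mxE. Qed.

Lemma tens_mulmx (u v : 'rV[K]_n1) : A^T *m tens u v *m A = tens (u *m A) (v *m A).
Proof. by rewrite /tens trmx_mul !mulmxA. Qed.

Variable F : 'rV[K]_n1 -> Prop.
Hypothesis HF : subspace F.

Lemma tens_span_factor M : tens_span F M ->
  exists r (B : 'M[K]_(r, n1)) (N : 'M[K]_r),
    [/\ row_free B, forall w, F (w *m B) & M = B^T *m N *m B].
Proof.
move=> [s [Hs ->]].
set vs := [seq q.2.1 | q <- s] ++ [seq q.2.2 | q <- s].
set U := \matrix_(i < size vs) nth 0 vs i.
have F_vs x : x \in vs -> F x.
  by rewrite mem_cat => /orP [] /mapP [q qs ->]; case: (Hs q qs).
have FU w : F (w *m U).
  rewrite mulmx_sum_row; apply: subspace_sum => // i _; apply: subspaceZ => //.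
  by rewrite rowK; apply/F_vs/mem_nth.
have U_vs x : x \in vs -> (x <= U)%MS.
  move=> xv; have Hi : (index x vs < size vs)%N by rewrite index_mem.
  have -> : x = row (Ordinal Hi) U by rewrite rowK /= nth_index.
  exact: row_sub.
set B := row_base U; set P := pinvmx B.
have BU : (B <= U)%MS by rewrite /B eq_row_base.
have FB w : F (w *m B) by rewrite -(mulmxKpV (submx_trans (submxMl w B) BU)).
have PB x : x \in vs -> x = x *m P *m B.
  by move=> xv; rewrite mulmxKpV // /B eq_row_base; apply: U_vs.
exists _, B, (\sum_(q <- s) q.1 *: ((q.2.1 *m P)^T *m (q.2.2 *m P))).
split => //; first exact: row_base_free.
rewrite mulmx_sumr mulmx_suml; apply: eq_big_seq => q qs.
rewrite -scalemxAr -scalemxAl /tens; congr (_ *: _).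
have E1 : q.2.1 = q.2.1 *m P *m B by apply: PB; rewrite mem_cat (map_f (fun q => q.2.1) qs).
have E2 : q.2.2 = q.2.2 *m P *m B by apply: PB; rewrite mem_cat (map_f (fun q => q.2.2) qs) orbT.
by rewrite {1}E1 {1}E2 trmx_mul !mulmxA.
Qed.

Hypothesis Hinj : forall x, F x -> x *m A = 0 -> x = 0.

Lemma tens_span_inj M : tens_span F M -> A^T *m M *m A = 0 -> M = 0.
Proof.
case/tens_span_factor => r [B [N [freeB FB ->]]] H0.
have /row_freeP [G BAG] : row_free (B *m A).
  rewrite -kermx_eq0; apply/eqP/row_matrixP => i; rewrite row0.
  apply: (row_free_inj freeB); rewrite mul0mx; apply: Hinj => //.
  by rewrite -mulmxA -row_mul mulmx_ker row0.
have H1 : (B *m A)^T *m N *m (B *m A) = 0 by rewrite trmx_mul -H0 !mulmxA.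
have -> : N = G^T *m ((B *m A)^T *m N *m (B *m A)) *m G.
  have -> : G^T *m ((B *m A)^T *m N *m (B *m A)) *m G
          = (B *m A *m G)^T *m N *m (B *m A *m G) by rewrite !trmx_mul !mulmxA.
  by rewrite BAG trmx1 mul1mx mulmx1.
by rewrite H1 mulmx0 mul0mx mulmx0 mul0mx.
Qed.

End MatrixMaps.

Section Convolution.
Variables (K : fieldType) (n1 n2 : nat) (h1 : hopf_data K n1) (h2 : hopf_data K n2).
Hypotheses (Hh1 : is_hopf h1) (Hh2 : is_hopf h2).
Implicit Types (phi psi chi : 'rV[K]_n1 -> 'rV[K]_n2) (x : 'rV[K]_n1) (C : 'M[K]_(n1, n2)).

(* Convolution computed through the basis vectors: it is the usual convolution
   only for linear [phi] and [psi]. *)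
Definition conv phi psi x : 'rV[K]_n2 :=
  \sum_(i < n1) \sum_(j < n1) delv h1 x i j *: mulv h2 (phi (ev K i)) (psi (ev K j)).

Definition conv_unit x : 'rV[K]_n2 := epsv h1 x *: hone h2.

Lemma conv_ext phi phi' psi psi' x :
  (forall i, phi (ev K i) = phi' (ev K i)) -> (forall j, psi (ev K j) = psi' (ev K j)) ->
  conv phi psi x = conv phi' psi' x.
Proof. by move=> E1 E2; apply: eq_bigr => i _; apply: eq_bigr => j _; rewrite E1 E2. Qed.

Lemma conv_unit_r C x : conv (mulmx^~ C) conv_unit x = x *m C.
Proof.
rewrite /conv delv_expand {2}(row_sum_delta x) mulmx_suml; apply: eq_bigr => k _.
rewrite -scalemxAl; congr (_ *: _).
transitivity (\sum_(i < n1) (\sum_(j < n1) hdel h1 k i j * heps h1 j) *: (ev K i *m C)).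
  apply: eq_bigr => i _; rewrite scaler_suml; apply: eq_bigr => j _.
  by rewrite /conv_unit epsv_ev mulvZr (mulv1 Hh2) scalerA.
under eq_bigr => i _ do rewrite (counit_r Hh1).
rewrite (bigD1 k) //= eqxx scale1r big1 ?addr0 // => i /negbTE ki.
by rewrite eq_sym ki scale0r.
Qed.

Lemma conv_unit_l C x : conv conv_unit (mulmx^~ C) x = x *m C.
Proof.
rewrite /conv delv_expand {2}(row_sum_delta x) mulmx_suml; apply: eq_bigr => k _.
rewrite -scalemxAl; congr (_ *: _).
transitivity (\sum_(j < n1) (\sum_(i < n1) hdel h1 k i j * heps h1 i) *: (ev K j *m C)).
  rewrite exchange_big /=; apply: eq_bigr => j _; rewrite scaler_suml.
  by apply: eq_bigr => i _; rewrite /conv_unit epsv_ev mulvZl (mul1v Hh2) scalerA.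
under eq_bigr => j _ do rewrite (counit_l Hh1).
rewrite (bigD1 k) //= eqxx scale1r big1 ?addr0 // => i /negbTE ki.
by rewrite eq_sym ki scale0r.
Qed.

Lemma conv_assoc phi psi chi x :
  conv (conv phi psi) chi x = conv phi (conv psi chi) x.
Proof.
rewrite /conv delv_expand [in RHS]delv_expand; apply: eq_bigr => k _; congr (_ *: _).
pose T a b c := mulv h2 (mulv h2 (phi (ev K a)) (psi (ev K b))) (chi (ev K c)).
transitivity (\sum_(a < n1) \sum_(b < n1) \sum_(c < n1)
                (\sum_(i < n1) hdel h1 k i c * hdel h1 i a b) *: T a b c).
  transitivity (\sum_(i < n1) \sum_(j < n1) \sum_(a < n1) \sum_(b < n1)
                 (hdel h1 k i j * hdel h1 i a b) *: T a b j).
    apply: eq_bigr => i _; apply: eq_bigr => j _; rewrite delv_ev mulv_suml scaler_sumr.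
    apply: eq_bigr => a _; rewrite mulv_suml scaler_sumr; apply: eq_bigr => b _.
    by rewrite mulvZl scalerA.
  rewrite exchange_big /=; under eq_bigr => j _ do rewrite exchange_big /=.
  under eq_bigr => j _ do under eq_bigr => a _ do rewrite exchange_big /=.
  rewrite exchange_big /=; under eq_bigr => a _ do rewrite exchange_big /=.
  by do 3 (apply: eq_bigr => ? _); rewrite scaler_suml.
transitivity (\sum_(a < n1) \sum_(b < n1) \sum_(c < n1)
                (\sum_(j < n1) hdel h1 k a j * hdel h1 j b c) *: T a b c).
  by do 3 (apply: eq_bigr => ? _); rewrite (hdel_coassoc Hh1).
transitivity (\sum_(i < n1) \sum_(j < n1) \sum_(c < n1) \sum_(d < n1)
               (hdel h1 k i j * hdel h1 j c d) *: T i c d).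
  apply: eq_bigr => a _; rewrite [RHS]exchange_big /=.
  under [RHS]eq_bigr => b _ do rewrite exchange_big /=.
  by do 2 (apply: eq_bigr => ? _); rewrite scaler_suml.
apply: eq_bigr => i _; apply: eq_bigr => j _; rewrite delv_ev mulv_sumr scaler_sumr.
apply: eq_bigr => c _; rewrite mulv_sumr scaler_sumr; apply: eq_bigr => d _.
by rewrite mulvZr scalerA /T (mulvA Hh2).
Qed.

End Convolution.

Section OrderDenominators.
Variables (K : fieldType) (R : K -> Prop) (n : nat) (L : 'rV[K]_n -> Prop).
Hypothesis Lspan : forall v, kspan L v.

Lemma order_ind (P : 'rV[K]_n -> Prop) : subspace P -> (forall x, L x -> P x) -> forall x, P x.
Proof. by move=> HP HL x; apply: (kspan_ind HP HL (Lspan x)). Qed.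

Hypotheses (HR : subring R) (HK : frac_field R) (HL : rsubmod R L).

Lemma order_denominator x : exists d, [/\ R d, d != 0 & L (d *: x)].
Proof.
case: HR => _ R1 _ _ RM; case: HL => L0 LD LZ.
case: (Lspan x) => s [Hs ->] {x}; elim: s Hs => [|q s IH] Hs.
  by exists 1; rewrite big_nil scaler0 oner_neq0.
have [|d [Rd d0 Ld]] := IH; first by move=> q' q's; apply: Hs; rewrite inE q's orbT.
case: (HK q.1) => a [b [Ra Rb b0 Eq]].
exists (d * b); split; [exact: RM | by rewrite mulf_neq0 |].
have -> : (d * b) *: \sum_(q0 <- q :: s) q0.1 *: q0.2
    = (d * a) *: q.2 + b *: (d *: \sum_(q <- s) q.1 *: q.2).
  by rewrite big_cons scalerDr !scalerA Eq -mulrA [b * _]mulrC divfK // [b * d]mulrC.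
by apply: LD; apply: LZ => //; [apply: RM | apply: Hs; rewrite mem_head].
Qed.

End OrderDenominators.

Section Transport.
Variables (K : fieldType) (R : K -> Prop) (n1 n2 : nat) (A : 'M[K]_(n1, n2)).

Definition mulmx_image (L : 'rV[K]_n1 -> Prop) (y : 'rV[K]_n2) := exists2 x, L x & y = x *m A.

Lemma rsubmod_image L : rsubmod R L -> rsubmod R (mulmx_image L).
Proof.
case=> L0 LD LZ; split; first by exists 0; rewrite ?mul0mx.
  by move=> _ _ [x Lx ->] [y Ly ->]; exists (x + y); [apply: LD | rewrite mulmxDl].
by move=> r _ Rr [x Lx ->]; exists (r *: x); [apply: LZ | rewrite scalemxAl].
Qed.

Lemma rtens_image L M : rtens R L M -> rtens R (mulmx_image L) (A^T *m M *m A).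
Proof.
case=> s [Hs ->]; exists [seq (q.1, (q.2.1 *m A, q.2.2 *m A)) | q <- s]; split.
  move=> _ /mapP [q qs ->] /=; case: (Hs q qs) => Rq Lu Lv.
  by split => //; [exists q.2.1 | exists q.2.2].
rewrite big_map mulmx_sumr mulmx_suml; apply: eq_bigr => q _.
by rewrite -scalemxAr -scalemxAl tens_mulmx.
Qed.

Hypothesis freeA : row_free A.

Lemma fgproj_image L : fgproj R L -> fgproj R (mulmx_image L).
Proof.
case/row_freeP: freeA => Ai AAi.
have back y : mulmx_image L y -> L (y *m Ai) /\ y = y *m Ai *m A.
  by case=> x Lx ->; rewrite -mulmxA AAi mulmx1.
case=> [[s [Hs Hgen]] [m [a [b [[a_R aD aZ b_L] [bD bZ ba]]]]]].
split.
  exists [seq y *m A | y <- s]; split; first by move=> _ /mapP [x xs ->]; exists x; auto.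
  move=> _ [x Lx ->]; case: (Hgen x Lx) => r [Rr ->]; rewrite size_map; exists r.
  split=> //; rewrite mulmx_suml; apply: eq_bigr => i _.
  by rewrite (nth_map 0) // scalemxAl.
exists m, (fun y => a (y *m Ai)), (fun u => b u *m A); split; split.
- by move=> y /back [Ly _]; apply: a_R.
- by move=> y z /back [Ly _] /back [Lz _]; rewrite mulmxDl aD.
- by move=> r y Rr /back [Ly _]; rewrite -scalemxAl aZ.
- by move=> u Ru; exists (b u); [apply: b_L | ].
- by move=> u w Ru Rw; rewrite bD // mulmxDl.
- by move=> r u Rr Ru; rewrite bZ // scalemxAl.
- by move=> y /back [Ly E]; rewrite ba // -E.
Qed.

Variables (h1 : hopf_data K n1) (h2 : hopf_data K n2) (L : 'rV[K]_n1 -> Prop).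
Hypotheses (HL : hopf_order R h1 L) (ontoA : forall y, exists x : 'rV[K]_n1, y = x *m A).
Hypotheses (mulv_A : forall x y : 'rV[K]_n1, mulv h2 (x *m A) (y *m A) = mulv h1 x y *m A)
           (hone_A : hone h1 *m A = hone h2)
           (delv_A : forall x : 'rV[K]_n1, delv h2 (x *m A) = A^T *m delv h1 x *m A)
           (epsv_A : forall x : 'rV[K]_n1, epsv h2 (x *m A) = epsv h1 x)
           (antv_A : forall x : 'rV[K]_n1, antv h2 (x *m A) = antv h1 x *m A).

Lemma hopf_order_image : hopf_order R h2 (mulmx_image L).
Proof.
case: HL => [[Lsub Lfg Lspan L1 LM] [Leps Lant Ldel]].
split; split; first exact: rsubmod_image.
- exact: fgproj_image.
- move=> v; case: (ontoA v) => x ->; case: (Lspan x) => s [Hs ->].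
  exists [seq (q.1, q.2 *m A) | q <- s]; split.
    by move=> _ /mapP [q qs ->]; exists q.2; [apply: Hs |].
  by rewrite big_map mulmx_suml; apply: eq_bigr => q _; rewrite scalemxAl.
- by exists (hone h1).
- by move=> _ _ [x Lx ->] [y Ly ->]; exists (mulv h1 x y); [apply: LM | rewrite mulv_A].
- by move=> _ [x Lx ->]; rewrite epsv_A; apply: Leps.
- by move=> _ [x Lx ->]; exists (antv h1 x); [apply: Lant | rewrite antv_A].
- by move=> _ [x Lx ->]; rewrite delv_A; apply/rtens_image/Ldel.
Qed.

End Transport.

Section DieudonneImage.
Variables (K : fieldType) (R : K -> Prop) (n1 n2 : nat).
Variables (h1 : hopf_data K n1) (h2 : hopf_data K n2).
Hypotheses (Hh1 : is_hopf h1) (Hh2 : is_hopf h2).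
Variables (L1 : 'rV[K]_n1 -> Prop) (L2 : 'rV[K]_n2 -> Prop).
Hypotheses (HR : subring R) (HK : frac_field R).
Hypotheses (HL1 : hopf_order R h1 L1) (HL2 : hopf_order R h2 L2).
Hypotheses (Hg1 : prim_gen R h1 L1) (Hg2 : prim_gen R h2 L2).
Variables (f : 'rV[K]_n1 -> 'rV[K]_n2) (A : 'M[K]_(n1, n2)).
Hypotheses (HA : hopf_hom h1 h2 L1 L2 R A) (HAf : forall t, prim h1 L1 t -> t *m A = f t).
Hypothesis Hiso : kext_iso h1 h2 L1 L2 f.
Implicit Types (x y : 'rV[K]_n1).

Let L1sub : rsubmod R L1. Proof. by case: HL1 => [[]]. Qed.
Let L1span v : kspan L1 v. Proof. by case: HL1 => [[_ _ H _ _] _]. Qed.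

Lemma hone_mulmx : hone h1 *m A = hone h2.
Proof. by case: HA. Qed.

Lemma mulv_mulmx x y : mulv h2 (x *m A) (y *m A) = mulv h1 x y *m A.
Proof.
have lin_l z : subspace (fun u => mulv h2 (u *m A) (z *m A) = mulv h1 u z *m A).
  apply: subspace_eq => [u v|c u|u v|c u].
  - by rewrite mulmxDl mulvDl.
  - by rewrite -scalemxAl mulvZl.
  - by rewrite mulvDl mulmxDl.
  - by rewrite mulvZl scalemxAl.
have lin_r z : subspace (fun u => mulv h2 (z *m A) (u *m A) = mulv h1 z u *m A).
  apply: subspace_eq => [u v|c u|u v|c u].
  - by rewrite mulmxDl mulvDr.
  - by rewrite -scalemxAl mulvZr.
  - by rewrite mulvDr mulmxDl.
  - by rewrite mulvZr scalemxAl.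
have HL1y u : L1 u -> mulv h2 (u *m A) (y *m A) = mulv h1 u y *m A.
  move=> Lu; move: y; apply: (order_ind L1span (lin_r u)) => v Lv.
  by case: HA => _ H _ _ _; apply: H.
by move: x; apply: (order_ind L1span (lin_l y)).
Qed.

Lemma delv_mulmx x : delv h2 (x *m A) = A^T *m delv h1 x *m A.
Proof.
move: x; apply: (order_ind L1span) => [|u Lu]; last by case: HA => _ _ _ H _; apply: H.
apply: subspace_eq => [u v|c u|u v|c u].
- by rewrite mulmxDl delvD.
- by rewrite -scalemxAl delvZ.
- by rewrite delvD mulmxDr mulmxDl.
- by rewrite delvZ -scalemxAr -scalemxAl.
Qed.

Lemma epsv_mulmx x : epsv h2 (x *m A) = epsv h1 x.
Proof.
move: x; apply: (order_ind L1span) => [|u Lu]; last by case: HA => _ _ _ _ H; apply: H.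
split.
- by rewrite mul0mx -[0 : 'rV_n1](scale0r 0) -[0 : 'rV_n2](scale0r 0) !epsvZ !mul0r.
- by move=> u v Hu Hv; rewrite mulmxDl !epsvD Hu Hv.
- by move=> c u Hu; rewrite -scalemxAl !epsvZ Hu.
Qed.

(* Injectivity on primitives is where the hypothesis on [K (x) f] enters: a
   primitive [x] has a nonzero multiple [d x] in [L1], and [f (d x) = 0]. *)
Lemma primitive_mulmx_inj x : primitive h1 x -> x *m A = 0 -> x = 0.
Proof.
move=> Px xA0; have [d [Rd d0 Ldx]] := order_denominator L1span HR HK L1sub x.
have Pdx : prim h1 L1 (d *: x).
  by split => //; rewrite /primitive delvZ Px scalerDr tensZl tensZr.
have fdx0 : f (d *: x) = 0 by rewrite -HAf // -scalemxAl xA0 scaler0.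
have dx0 : d *: x = 0.
  have := proj1 Hiso [:: (1, d *: x)]; rewrite !big_seq1 !scale1r; apply=> // q.
  by rewrite inE => /eqP ->.
by move/eqP: dx0; rewrite scaler_eq0 (negbTE d0) => /eqP.
Qed.

Lemma prim_filt_mulmx_inj m x : prim_filt h1 m x -> x *m A = 0 -> x = 0.
Proof.
elim: m x => [|m IH] x /=.
  move=> [c ->]; rewrite -scalemxAl hone_mulmx => /eqP.
  by rewrite scaler_eq0 (negbTE (hone_neq0 Hh2)) orbF => /eqP ->; rewrite scale0r.
move=> Hx xA0; apply: primitive_mulmx_inj => //; apply: primitive_rdelv.
apply: (tens_span_inj (prim_filt_subspace h1 m) IH (rdelv_prim_filt Hh1 Hx)).
rewrite /rdelv !mulmxBr !mulmxBl -delv_mulmx !tens_mulmx xA0 hone_mulmx delv0.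
by rewrite /tens trmx0 !mul0mx mulmx0 !subr0.
Qed.

Lemma prim_filt_exhaustive x : exists m, prim_filt h1 m x.
Proof.
pose S y := exists m, prim_filt h1 m y.
have SS : subspace S.
  split; first by exists 0%N, 0; rewrite scale0r.
    move=> u v [a Ha] [b Hb]; exists (maxn a b).
    apply: (subspaceD (prim_filt_subspace _ _)).
      exact: prim_filt_mono (leq_maxl a b) Ha.
    exact: prim_filt_mono (leq_maxr a b) Hb.
  by move=> c u [a Ha]; exists a; apply: (subspaceZ (prim_filt_subspace _ _)).
move: x; apply: (order_ind L1span SS); apply: Hg1.
  split; first by case: SS => S0 SD SZ; split => // r u _; apply: SZ.
    by exists 0%N, 1; rewrite scale1r.
  by move=> u v [a Ha] [b Hb]; exists (a + b)%N; apply: prim_filt_mul.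
by move=> t [_ Pt]; exists 1%N; apply: prim_filt_prim.
Qed.

Lemma mulmx_row_free : row_free A.
Proof.
rewrite -kermx_eq0; apply/eqP/row_matrixP => i; rewrite row0.
have [m Hm] := prim_filt_exhaustive (row i (kermx A)).
by apply: prim_filt_mulmx_inj Hm _; rewrite -row_mul mulmx_ker row0.
Qed.

Lemma mulmx_onto (y : 'rV[K]_n2) : exists x, y = x *m A.
Proof.
pose S v := exists x, v = x *m A.
have SS : subspace S.
  split; first by exists 0; rewrite mul0mx.
    by move=> u v [a ->] [b ->]; exists (a + b); rewrite mulmxDl.
  by move=> c u [a ->]; exists (c *: a); rewrite scalemxAl.
have L2S : forall v, L2 v -> S v.
  apply: Hg2.
    split; first by case: SS => S0 SD SZ; split => // r u _; apply: SZ.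
      by exists (hone h1); rewrite hone_mulmx.
    by move=> u v [a ->] [b ->]; exists (mulv h1 a b); rewrite mulv_mulmx.
  move=> t Pt; have [s [Hs ->]] := (proj2 Hiso) t (kspan_gen Pt).
  exists (\sum_(q <- s) q.1 *: q.2); rewrite mulmx_suml.
  by apply: eq_big_seq => q qs; rewrite -scalemxAl HAf //; apply: Hs.
by case: HL2 => [[_ _ Hsp _ _] _]; apply: (kspan_ind SS L2S (Hsp y)).
Qed.

Lemma conv_antv2_mulmx x :
  conv h1 h2 (mulmx^~ (A *m hant h2)) (mulmx^~ A) x = conv_unit h1 h2 x.
Proof.
rewrite /conv_unit -epsv_mulmx -(antipode_l Hh2).
transitivity (\sum_(i < n1) \sum_(j < n1) \sum_(k < n2) \sum_(l < n2)
   (delv h1 x i j * (A i k * A j l)) *: mulv h2 (antv h2 (ev K k)) (ev K l)).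
  apply: eq_bigr => i _; apply: eq_bigr => j _.
  rewrite mulmxA -/(antv h2 _) mulv_antv_expand scaler_sumr; apply: eq_bigr => k _.
  by rewrite scaler_sumr; apply: eq_bigr => l _; rewrite !ev_mulmx scalerA.
rewrite exchange_big /=; under eq_bigr => j _ do rewrite exchange_big /=.
under eq_bigr => j _ do under eq_bigr => k _ do rewrite exchange_big /=.
rewrite exchange_big /=; under eq_bigr => k _ do rewrite exchange_big /=.
apply: eq_bigr => k _; apply: eq_bigr => l _.
under eq_bigr => j _ do rewrite -scaler_suml.
rewrite -scaler_suml delv_mulmx; congr (_ *: _).
rewrite mxE; apply: eq_bigr => j _; rewrite !mxE mulr_suml; apply: eq_bigr => i _.
by rewrite !mxE mulrA [delv h1 x i j * A i k]mulrC.
Qed.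

Lemma conv_mulmx_antv1 x :
  conv h1 h2 (mulmx^~ A) (mulmx^~ (hant h1 *m A)) x = conv_unit h1 h2 x.
Proof.
rewrite /conv /conv_unit -hone_mulmx scalemxAl -(antipode_r Hh1) mulmx_suml.
apply: eq_bigr => i _.
rewrite mulmx_suml; apply: eq_bigr => j _.
by rewrite mulmxA -/(antv h1 _) mulv_mulmx scalemxAl.
Qed.

Lemma antv_mulmx x : antv h2 (x *m A) = antv h1 x *m A.
Proof.
rewrite /antv -!mulmxA -(conv_unit_r Hh1 Hh2 (A *m hant h2) x).
rewrite -(conv_unit_l Hh1 Hh2 (hant h1 *m A) x).
transitivity (conv h1 h2 (mulmx^~ (A *m hant h2))
                (conv h1 h2 (mulmx^~ A) (mulmx^~ (hant h1 *m A))) x).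
  by apply: conv_ext => // j; rewrite conv_mulmx_antv1.
by rewrite -(conv_assoc Hh1 Hh2); apply: conv_ext => // i; rewrite conv_antv2_mulmx.
Qed.

Lemma hopf_order_mulmx_image : hopf_order R h2 (mulmx_image A L1).
Proof.
exact: (hopf_order_image mulmx_row_free HL1 mulmx_onto mulv_mulmx hone_mulmx
                         delv_mulmx epsv_mulmx antv_mulmx).
Qed.

End DieudonneImage.

Unset Implicit Arguments.

Theorem lemma3p4 (K : fieldType) (R : K -> Prop) (p : nat)
  (HR : dedekind R) (HK : frac_field R) (Hp : prime p) (HpK : p \in [pchar K])
  (n1 n2 : nat) (h1 : hopf_data K n1) (h2 : hopf_data K n2)
  (Hh1 : is_hopf h1) (Hh2 : is_hopf h2)
  (Hn1 : exists k, n1 = (p ^ k)%N) (Hn2 : exists k, n2 = (p ^ k)%N)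
  (L1 : 'rV[K]_n1 -> Prop) (L2 : 'rV[K]_n2 -> Prop)
  (HL1 : hopf_order R h1 L1) (HL2 : hopf_order R h2 L2)
  (Hg1 : prim_gen R h1 L1) (Hg2 : prim_gen R h2 L2)
  (f : 'rV[K]_n1 -> 'rV[K]_n2) (Hf : RF_hom h1 h2 L1 L2 R p f)
  (A : 'M[K]_(n1, n2)) (HA : hopf_hom h1 h2 L1 L2 R A)
  (HAf : forall t, prim h1 L1 t -> t *m A = f t)
  (Hiso : kext_iso h1 h2 L1 L2 f) :
  hopf_order R h2 (fun y => exists2 x, L1 x & y = x *m A) /\ hopf_order R h2 L2.
Proof.
have HRs : subring R by case: HR.
split; last exact: HL2.
exact: (hopf_order_mulmx_image Hh1 Hh2 HRs HK HL1 HL2 Hg1 Hg2 HA HAf Hiso).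
Qed.
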